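(* Let $r\ge 1$, $m=2^r$, and let $n$ be a positive integer with $m\mid n$. Let $b$ be an odd positive integer having property $\mathcal{P}$ with respect to $n$. Then $x^n+b^m$ is irreducible over $\mathbb{Z}$.
   Context: For a positive integer $N$, a positive integer $b$ has property $\mathcal{P}$ with respect to $N$ if either $b$ is a prime number, or $b=(p_1^{b_1}p_2^{b_2}\cdots p_k^{b_k})^d$ where $k\ge 2$, $p_1,\dots,p_k$ are distinct primes, $b_1,\dots,b_k\ge 1$, $\gcd(b_1,\ldots,b_k)=1$, and $d$ is a positive integer with $\gcd(d,N)=1$. A monic polynomial in $\mathbb{Z}[x]$ of degree $\ge 1$ is irreducible over $\mathbb{Z}$ if it is not a product of two polynomials in $\mathbb{Z}[x]$ of degree at least $1$. *)

From mathcomp Require Import all_boot all_order all_algebra.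
Set Implicit Arguments. Unset Strict Implicit. Unset Printing Implicit Defensive.
Import GRing.Theory Num.Theory.

Definition propP (N b : nat) : Prop :=
  prime b \/
  exists (ps es : seq nat) (d : nat),
    [/\ size ps = size es, (2 <= size ps)%N, uniq ps & all prime ps] /\
    [/\ all (fun e => 0 < e) es,
        (\big[gcdn/0]_(e <- es) e = 1)%N,
        0 < d & coprime d N] /\
    b = (\prod_(i < size ps) (nth 0 ps i) ^ (nth 0 es i)) ^ d.

Local Open Scope ring_scope.

Definition irreducible_over_Z (p : {poly int}) : Prop :=
  p \is monic /\ (1 < size p)%N /\
  forall q r : {poly int}, p = q * r -> (size q <= 1)%N \/ (size r <= 1)%N.

From mathcomp Require Import all_boot all_order all_algebra all_field ring zify.
Set Implicit Arguments. Unset Strict Implicit. Unset Printing Implicit Defensive.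
Import GRing.Theory Num.Theory.

(* Let c = b ^ m with m = 2 ^ r, and call X^N + c in Z[X] free of proper
   divisors when each of its divisors in Z[X] is constant or of degree N.  We
   prove this for every divisor N of n, by strong induction on N; the case
   N = n gives irreducibility.
   - N odd: if X^N + c = h * s then every complex root z of h satisfies
     z^N = -c, so |h(0)|^N = c^(deg h).  Comparing p-adic valuations, property
     P of b (and N coprime to m) forces N to divide deg h.
   - N = 2M: let g be a nonconstant divisor of minimal degree; g(-X) is a
     divisor too.  If g and g(-X) are coprime, then g * g(-X) = Q(X^2) with
     Q | X^M + c of degree deg g, so deg g = M by induction and the cofactor of
     g is +-g(-X); evaluating at 1 gives 1 + c = +-(e^2 - o^2), impossible as
     c = 1 mod 4.  Otherwise minimality gives g(-X) = +-g; the sign - would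
     make g(0) = 0, and the sign + makes g = E(X^2) with E | X^M + c, whence
     deg g = 2M by induction. *)

Lemma logn_prod_prime_powers (ps es : seq nat) (i : nat) :
  uniq ps -> all prime ps -> i < size ps ->
  logn (nth 0 ps i) (\prod_(j < size ps) nth 0 ps j ^ nth 0 es j) = nth 0 es i.
Proof.
move=> ups pps ip; set p := nth 0 ps i.
have pj (j : 'I_(size ps)) : prime (nth 0 ps j) by apply: (allP pps); rewrite mem_nth.
have pp : prime p := pj (Ordinal ip).
rewrite (bigD1 (Ordinal ip)) //= mulnC logn_Gauss ?pfactorK //.
elim/big_ind: _ => [|x y|j nji]; [exact: coprimen1 | by rewrite coprimeMr => -> |].
rewrite coprimeXr // prime_coprime // dvdn_prime2 ?pj //.
by rewrite nth_uniq ?ltn_ord // eq_sym; apply: contra nji => /eqP ji; apply/eqP/val_inj.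
Qed.

Lemma dvdn_mul_big_gcd (N k : nat) (es : seq nat) :
  (forall e, e \in es -> N %| k * e) -> N %| k * \big[gcdn/0]_(e <- es) e.
Proof.
move=> dvd; rewrite big_seq; elim/big_ind: _ => [|x y|e /dvd //].
  by rewrite muln0 dvdn0.
by rewrite muln_gcdr dvdn_gcd => -> ->.
Qed.

Lemma propP_exponent (n b m N a k : nat) :
  coprime N m -> N %| n -> propP n b -> a ^ N = (b ^ m) ^ k -> N %| k.
Proof.
move=> cNm Nn [pb | [ps [es [d [[sz _ ups pps] [[_ gcd1 _ cdn] bE]]]]]] eN.
  have := congr1 (logn b) eN; rewrite !lognX (logn_prime _ pb) eqxx muln1 => h.
  by rewrite -(Gauss_dvdl _ cNm) -h dvdn_mulr.
have cNd : coprime N d by rewrite coprime_sym (coprime_dvdr Nn).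
rewrite -(muln1 k) -gcd1; apply: dvdn_mul_big_gcd => _ /(nthP 0) [i ip <-].
rewrite -sz in ip.
have := congr1 (logn (nth 0 ps i)) eN; rewrite bE !lognX logn_prod_prime_powers // => h.
have : N %| k * (m * (d * nth 0 es i)) by rewrite -h dvdn_mulr.
by rewrite mulnCA Gauss_dvdr // mulnCA Gauss_dvdr.
Qed.

Lemma odd_pow_two_pow_mod4 (b r : nat) :
  (0 < r)%N -> odd b -> (b ^ (2 ^ r) %% 4 = 1)%N.
Proof.
case: r => // r _ ob; rewrite expnS expnM -modnXm.
have [k ->] : exists k, b = k.*2.+1.
  by exists b./2; rewrite -[LHS]odd_double_half ob.
suff -> : (k.*2.+1 ^ 2 %% 4 = 1)%N by rewrite exp1n.
have -> : (k.*2.+1 ^ 2 = (k * k + k) * 4 + 1)%N by rewrite -muln2; ring.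
by rewrite modnMDl.
Qed.

Local Open Scope ring_scope.

Section EvenOddParts.
Variable R : comNzRingType.
Implicit Types p q : {poly R}.

Lemma even_poly_comp_X2 p : even_poly (p \Po 'X^2) = p.
Proof.
apply/polyP => i; rewrite coef_even_poly coef_comp_poly_Xn //.
by rewrite -muln2 dvdn_mull // mulnK.
Qed.

Lemma odd_poly_comp_X2 p : odd_poly (p \Po 'X^2) = 0.
Proof.
apply/polyP => i; rewrite coef_odd_poly coef_comp_poly_Xn // coef0.
by rewrite -[i.*2.+1]addn1 -muln2 dvdn_addr ?dvdn_mull.
Qed.

Lemma even_poly_mul_comp_X2 p q :
  even_poly (p * (q \Po 'X^2)) = even_poly p * q.
Proof.
rewrite -{1}(poly_even_odd p) mulrDl mulrAC -!comp_polyM even_polyD.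
by rewrite even_poly_comp_X2 even_polyMX odd_poly_comp_X2 mul0r addr0.
Qed.

Lemma comp_poly_NX p :
  p \Po (- 'X) = even_poly p \Po 'X^2 - (odd_poly p \Po 'X^2) * 'X.
Proof.
rewrite -{1}(poly_even_odd p) comp_polyD comp_polyM comp_polyX.
by rewrite -!comp_polyA comp_Xn_poly sqrrN mulrN.
Qed.

Lemma odd_poly_comp_NX p : odd_poly (p \Po (- 'X)) = - odd_poly p.
Proof.
by rewrite comp_poly_NX linearB /= odd_poly_comp_X2 odd_polyMX even_poly_comp_X2 sub0r.
Qed.

Lemma mul_comp_poly_NX p :
  p * (p \Po (- 'X)) = (even_poly p ^+ 2 - 'X * odd_poly p ^+ 2) \Po 'X^2.
Proof.
rewrite comp_poly_NX -{1}(poly_even_odd p) !expr2.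
rewrite comp_polyB !comp_polyM comp_polyX.
set E := _ \Po _; set O := _ \Po _.
ring.
Qed.

Lemma horner_mul_comp_NX p :
  p.[1] * p.[-1] = (even_poly p).[1] ^+ 2 - (odd_poly p).[1] ^+ 2.
Proof.
have := congr1 (horner^~ 1) (mul_comp_poly_NX p).
rewrite hornerM !horner_comp hornerN hornerX hornerXn expr1n => ->.
by rewrite !hornerE.
Qed.

End EvenOddParts.

Section IdomainParts.
Variable R : idomainType.
Implicit Types p q : {poly R}.

Lemma size_comp_poly_X2 p : (size (p \Po 'X^2)).-1 = ((size p).-1 * 2)%N.
Proof. by rewrite size_comp_poly size_polyXn. Qed.

Lemma dvdp_comp_X2 p q : (p \Po 'X^2) %| (q \Po 'X^2) -> p %| q.
Proof.
case/Pdiv.Idomain.dvdpP => [[c r]] /= c0 e.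
apply/Pdiv.Idomain.dvdpP; exists (c, even_poly r) => //=.
by rewrite -(even_poly_comp_X2 q) -even_polyZ e even_poly_mul_comp_X2.
Qed.

Lemma size_norm_poly p :
  size (even_poly p ^+ 2 - 'X * odd_poly p ^+ 2) = size p.
Proof.
have [->|p0] := eqVneq p 0.
  by rewrite -polyC0 even_polyC odd_polyC polyC0 expr0n mulr0 subr0.
set Q := _ - _.
have pN0 : p \Po (- 'X) != 0 by rewrite comp_poly2_eq0 ?size_polyN ?size_polyX.
have Q0 : Q != 0.
  apply: contraNneq (mulf_neq0 p0 pN0) => Q0.
  by rewrite mul_comp_poly_NX -/Q Q0 comp_poly0.
have sp : (0 < size p)%N by rewrite size_poly_gt0.
have sQ : (0 < size Q)%N by rewrite size_poly_gt0.
have := size_comp_poly_X2 Q; rewrite -mul_comp_poly_NX size_mul //.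
rewrite size_comp_poly2 ?size_polyN ?size_polyX //.
rewrite -(prednK sQ) -(prednK sp) addSn addnS /=; lia.
Qed.

Lemma eqp_lead_scale p q u :
  p %= q -> lead_coef p = u * lead_coef q -> p = u *: q.
Proof.
have [->|q0] := eqVneq q 0; first by rewrite eqp0 scaler0 => /eqP.
move=> /eqp_eq + lpq; rewrite lpq mulrC -scalerA -!mul_polyC.
by move/mulfI; apply; rewrite polyC_eq0 lead_coef_eq0.
Qed.

Lemma lead_coef_comp_NX p :
  lead_coef (p \Po (- 'X)) = (-1) ^+ (size p).-1 * lead_coef p.
Proof.
by rewrite lead_coef_comp ?size_polyN ?size_polyX // lead_coefN lead_coefX mulrC.
Qed.

End IdomainParts.

Lemma odd_poly_eq0 (R : numDomainType) (p : {poly R}) :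
  p \Po (- 'X) = p -> odd_poly p = 0.
Proof.
move=> pN; have := odd_poly_comp_NX p; rewrite pN => oN.
apply/polyP => i; have /eqP := congr1 (fun q : {poly R} => q`_i) oN.
by rewrite coefN coef0 eq_sym eqNr => /eqP.
Qed.

Lemma int_mul_eq1 (u v : int) : u * v = 1 -> v = u.
Proof.
move=> uv; have uU : u \is a GRing.unit by apply/unitrPr; exists v.
by rewrite -[v]mul1r -(mulVr uU) -mulrA uv mulr1.
Qed.

Lemma norm_int_unit (u v : int) : u * v = 1 -> `|u| = 1.
Proof.
move=> uv; have /eqP := congr1 absz uv; rewrite abszM muln_eq1 => /andP[/eqP u1 _].
by rewrite -abszE u1.
Qed.

Lemma sqr_diff_neq_2mod4 (e o k : int) : e ^+ 2 - o ^+ 2 <> 4 * k + 2.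
Proof.
have split2 (x : int) : exists a i : int, x = 2 * a + i /\ (i = 0 \/ i = 1).
  exists (x %/ 2)%Z, (x %% 2)%Z; split; first by rewrite {1}(divz_eq x 2) mulrC.
  have := modz_ge0 x (isT : (2:int) != 0); have := ltz_pmod x (isT : (0 < 2 :> int)).
  lia.
have [a [i [-> hi]]] := split2 e; have [b [j [-> hj]]] := split2 o.
by case: hi => ->; case: hj => ->; nia.
Qed.

Definition binom_poly (N c : nat) : {poly int} := 'X^N + c%:R%:P.

Definition no_proper_divisor (N c : nat) : Prop :=
  forall q : {poly int}, q %| binom_poly N c -> (size q <= 1)%N \/ size q = N.+1.

Section BinomPoly.
Variables (N c : nat).
Hypothesis N_gt0 : (0 < N)%N.

Lemma size_binom_poly : size (binom_poly N c) = N.+1.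
Proof. exact: size_XnaddC. Qed.

Lemma binom_poly_neq0 : binom_poly N c != 0.
Proof. by rewrite -size_poly_eq0 size_binom_poly. Qed.

Lemma lead_coef_binom_poly : lead_coef (binom_poly N c) = 1.
Proof. exact: lead_coefXnaddC. Qed.

Lemma binom_poly_at0 : (binom_poly N c).[0] = c%:R.
Proof. by rewrite !hornerE expr0n gtn_eqF // add0r. Qed.

Lemma divisor_binom_poly_at0 (g : {poly int}) :
  (0 < c)%N -> g %| binom_poly N c -> g.[0] != 0.
Proof.
move=> c_gt0 /Pdiv.Idomain.dvdpP [[k s]] /= k0 e.
have := congr1 (horner^~ 0) e; rewrite hornerZ hornerM binom_poly_at0.
apply: contra_eq_neq => ->; rewrite mulr0.
by rewrite mulf_neq0 // pnatr_eq0 -lt0n.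
Qed.

End BinomPoly.

Lemma binom_poly_at1 (N c : nat) : (binom_poly N c).[1] = 1 + c%:R.
Proof. by rewrite !hornerE expr1n. Qed.

Lemma binom_poly_double (M c : nat) : binom_poly M.*2 c = binom_poly M c \Po 'X^2.
Proof. by rewrite /binom_poly comp_polyD comp_polyC comp_Xn_poly -exprM mulnC muln2. Qed.

Lemma dvdp_binom_poly_NX (M c : nat) (g : {poly int}) :
  g %| binom_poly M.*2 c -> g \Po (- 'X) %| binom_poly M.*2 c.
Proof.
move=> /(dvdp_comp_poly (- 'X)); rewrite binom_poly_double -comp_polyA.
by rewrite comp_Xn_poly sqrrN.
Qed.

(* Odd step, analytic half: a factor h of X^N + c satisfies
   |h(0)|^N = c^(deg h), since its complex roots all have modulus c^(1/N)
   and its leading coefficient is a unit. *)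
Lemma binom_factor_at0 (N c : nat) (h r : {poly int}) :
  (0 < N)%N -> binom_poly N c = h * r -> (`|h.[0]| ^ N = c ^ (size h).-1)%N.
Proof.
move=> N_gt0 e.
pose hC := map_poly (intr : int -> algC) h.
have lh : `|lead_coef hC| = 1.
  rewrite (lead_coef_map_inj (@intr_inj algC)) // -intr_norm.
  by rewrite (norm_int_unit (v := lead_coef r)) // -lead_coefM -e lead_coef_binom_poly.
have eC : 'X^N + (c%:R)%:P = hC * map_poly (intr : int -> algC) r.
  have := congr1 (map_poly (intr : int -> algC)) e; rewrite rmorphM /= rmorphD /=.
  by rewrite map_polyXn map_polyC /= rmorph_nat.
have [rs hrs] := closed_field_poly_normal hC.
have lh0 : lead_coef hC != 0 by rewrite -normr_eq0 lh oner_eq0.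
have root_pow z : z \in rs -> z ^+ N = - c%:R.
  move=> zrs; have /rootP hz : root hC z by rewrite hrs rootZ ?root_prod_XsubC.
  have := congr1 (horner^~ z) eC; rewrite hornerM hz mul0r !hornerE.
  by move/eqP; rewrite addr_eq0 => /eqP.
have sh : size h = (size rs).+1.
  by rewrite -(size_map_inj_poly (@intr_inj algC)) // -/hC hrs size_scale ?size_prod_XsubC.
apply/eqP; rewrite -(@eqr_nat algC) !natrX natr_absz intr_norm sh /=; apply/eqP.
rewrite -horner_map -/hC rmorph0 hrs hornerZ horner_prod normrM lh mul1r.
rewrite normr_prod -prodrXl (eq_big_seq (fun _ => c%:R)) => [|z /root_pow zN].
  by rewrite big_const_seq count_predT; elim: (size rs) => //= k ->; rewrite exprS.
by rewrite hornerXsubC sub0r normrN -normrX zN normrN normr_nat.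
Qed.

Lemma coprime_no_proper_divisor (n b m N : nat) :
  coprime N m -> (0 < N)%N -> (N %| n)%N -> propP n b -> no_proper_divisor N (b ^ m).
Proof.
move=> cNm N_gt0 Nn Pb q qf.
have [q_le1|q_gt1] := leqP (size q) 1; [by left | right].
have [r e] := dvdpP_int qf.
have := binom_factor_at0 N_gt0 e; rewrite size_zprimitive => q0_pow.
have N_le : (N <= (size q).-1)%N.
  by apply: dvdn_leq (propP_exponent cNm Nn Pb q0_pow); rewrite -subn1 subn_gt0.
have := dvdp_leq (binom_poly_neq0 _ N_gt0) qf; rewrite size_binom_poly //.
by move=> sq; apply/anti_leq; rewrite sq -(prednK (ltnW q_gt1)) ltnS N_le.
Qed.

Lemma minimal_divisor_criterion (N c : nat) : (0 < N)%N ->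
  (forall g r : {poly int}, binom_poly N c = g * r -> (1 < size g)%N ->
    (forall p, p %| binom_poly N c -> (1 < size p)%N -> (size g <= size p)%N) ->
    size g = N.+1) ->
  no_proper_divisor N c.
Proof.
move=> N_gt0 minimal_full q qf.
have [q_le1|q_gt1] := leqP (size q) 1; [by left | right].
have f0 := binom_poly_neq0 c N_gt0.
elim: {q}(size q).+1 {-2}q (ltnSn (size q)) qf q_gt1 => // k IH q sq qf q_gt1.
have [r e] := dvdpP_int qf.
rewrite -(size_zprimitive q); apply: minimal_full e _ _; rewrite size_zprimitive //.
move=> p pf p_gt1; rewrite leqNgt; apply/negP => p_lt_q.
have := dvdp_leq f0 qf; rewrite size_binom_poly // -(IH p _ pf p_gt1).
  by rewrite leqNgt p_lt_q.
exact: leq_trans p_lt_q sq.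
Qed.

Lemma coprime_reflection_absurd (M c : nat) (g r : {poly int}) :
  (0 < M)%N -> (c %% 4 = 1)%N -> no_proper_divisor M c ->
  binom_poly M.*2 c = g * r -> (1 < size g)%N -> ~~ coprimep g (g \Po (- 'X)).
Proof.
move=> M_gt0 c_mod4 trivM e g_gt1; apply/negP => cop.
set gt := g \Po (- 'X) in cop *.
have f0 : binom_poly M.*2 c != 0 by rewrite binom_poly_neq0 // double_gt0.
have g0 : g != 0 by rewrite -size_poly_gt0 ltnW.
have r0 : r != 0 by apply: contraNneq f0; rewrite e => ->; rewrite mulr0.
have gf : g %| binom_poly M.*2 c by rewrite e dvdp_mulIl.
have normf : even_poly g ^+ 2 - 'X * odd_poly g ^+ 2 %| binom_poly M c.
  apply: dvdp_comp_X2; rewrite -mul_comp_poly_NX -binom_poly_double.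
  by rewrite Gauss_dvdp // gf dvdp_binom_poly_NX.
have sg : size g = M.+1.
  by case: (trivM _ normf); rewrite size_norm_poly // leqNgt g_gt1.
have sr : size r = M.+1.
  have := size_mul g0 r0; rewrite -e size_binom_poly ?double_gt0 // sg -addnn.
  by rewrite addSn /= -addnS => /addnI.
have gt_r : gt %= r.
  rewrite -dvdp_size_eqp ?size_comp_poly2 ?size_polyN ?size_polyX ?sg ?sr //.
  by rewrite -(Gauss_dvdpr _ (_ : coprimep gt g)) -?e ?dvdp_binom_poly_NX // coprimep_sym.
have lr : lead_coef r = lead_coef g.
  by apply: int_mul_eq1; rewrite -lead_coefM -e lead_coef_binom_poly // double_gt0.
have er : r = (-1) ^+ M *: gt.
  apply: eqp_lead_scale; first by rewrite eqp_sym.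
  by rewrite lead_coef_comp_NX sg signrMK lr.
have := binom_poly_at1 M.*2 c.
rewrite e hornerM er hornerZ /gt horner_comp hornerN hornerX mulrCA horner_mul_comp_NX.
have -> : 1 + c%:R = 4 * (c %/ 4)%:R + 2 :> int.
  by rewrite {1}(divn_eq c 4) c_mod4 addrC natrD natrM mulrC -addrA.
by rewrite -signr_odd; case: (odd M); rewrite ?mul1r ?mulN1r ?opprB;
  apply: sqr_diff_neq_2mod4.
Qed.

Lemma even_divisor_full (M c : nat) (g : {poly int}) :
  no_proper_divisor M c -> g %| binom_poly M.*2 c -> (1 < size g)%N ->
  g \Po (- 'X) = g -> size g = M.*2.+1.
Proof.
move=> trivM gf g_gt1 gN.
have gE : g = even_poly g \Po 'X^2.
  by rewrite -{1}(poly_even_odd g) odd_poly_eq0 // comp_poly0 mul0r addr0.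
have Ef : even_poly g %| binom_poly M c.
  by apply: dvdp_comp_X2; rewrite -gE -binom_poly_double.
have sgE : (size g - 1 = (size (even_poly g) - 1) * 2)%N.
  by rewrite !subn1 {1}gE size_comp_poly_X2.
rewrite -muln2; case: (trivM _ Ef) => sE; lia.
Qed.

Lemma even_step (M c : nat) (g r : {poly int}) :
  (0 < M)%N -> (c %% 4 = 1)%N -> no_proper_divisor M c ->
  binom_poly M.*2 c = g * r -> (1 < size g)%N ->
  (forall p, p %| binom_poly M.*2 c -> (1 < size p)%N -> (size g <= size p)%N) ->
  size g = M.*2.+1.
Proof.
move=> M_gt0 c_mod4 trivM e g_gt1 gmin.
have g0 : g != 0 by rewrite -size_poly_gt0 ltnW.
have gf : g %| binom_poly M.*2 c by rewrite e dvdp_mulIl.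
set gt := g \Po (- 'X).
have sgt : size gt = size g by rewrite size_comp_poly2 // size_polyN size_polyX.
set D := gcdp g gt.
have [D_le1|D_gt1] := leqP (size D) 1.
  have : coprimep g gt.
    by rewrite /coprimep eqn_leq D_le1 size_poly_gt0 gcdp_eq0 negb_and g0.
  by rewrite (negbTE (coprime_reflection_absurd M_gt0 c_mod4 trivM e g_gt1)).
have g_gt : g %= gt.
  have sD : size D = size g.
    apply/eqP; rewrite eqn_leq dvdp_leq ?dvdp_gcdl //.
    by rewrite gmin // (dvdp_trans (dvdp_gcdl _ _) gf).
  have Dg : D %= g by rewrite -dvdp_size_eqp ?dvdp_gcdl // sD.
  by rewrite -dvdp_size_eqp ?sgt // -(eqp_dvdl _ Dg) dvdp_gcdr.
have egt : gt = (-1) ^+ (size g).-1 *: g.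
  by apply: eqp_lead_scale; [rewrite eqp_sym | rewrite lead_coef_comp_NX].
rewrite -signr_odd in egt; case: (odd _) in egt.
  have c_gt0 : (0 < c)%N by rewrite lt0n; apply: contra_eqN c_mod4 => /eqP ->.
  have M2_gt0 : (0 < M.*2)%N by rewrite double_gt0.
  have := divisor_binom_poly_at0 M2_gt0 c_gt0 gf.
  have := congr1 (horner^~ 0) egt; rewrite /gt horner_comp hornerN hornerX oppr0.
  by rewrite hornerZ mulN1r => /eqP; rewrite eq_sym eqNr => /eqP ->; rewrite eqxx.
by apply: even_divisor_full trivM gf g_gt1 _; rewrite -/gt egt scale1r.
Qed.

Lemma binom_no_proper_divisor (n b r : nat) :
  (0 < r)%N -> odd b -> propP n b ->
  forall N, (0 < N)%N -> (N %| n)%N -> no_proper_divisor N (b ^ (2 ^ r)).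
Proof.
move=> r_gt0 ob Pb N; elim/ltn_ind: N => N IH N_gt0 Nn.
case oN : (odd N).
  by apply: coprime_no_proper_divisor Nn Pb; rewrite // coprimeXr ?coprimen2.
have NE : N = (N./2).*2 by rewrite -[LHS]odd_double_half oN.
have M_gt0 : (0 < N./2)%N by rewrite -double_gt0 -NE.
have trivM : no_proper_divisor N./2 (b ^ (2 ^ r)).
  apply: IH => //; first by rewrite [X in (_ < X)%N]NE -addnn -[X in (X < _)%N]add0n ltn_add2r.
  by apply: dvdn_trans Nn; rewrite [X in (_ %| X)%N]NE -muln2 dvdn_mulr.
rewrite NE; apply: minimal_divisor_criterion; first by rewrite -NE.
move=> g q e g_gt1 gmin.
exact: even_step M_gt0 (odd_pow_two_pow_mod4 r_gt0 ob) trivM e g_gt1 gmin.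
Qed.

Lemma no_proper_divisor_irreducible (N c : nat) :
  (0 < N)%N -> no_proper_divisor N c -> irreducible_over_Z (binom_poly N c).
Proof.
move=> N_gt0 noprop; split; first exact: monicXnaddC.
split; first by rewrite size_binom_poly.
move=> q s e.
have qf : q %| binom_poly N c by rewrite e dvdp_mulIl.
have [q_le1|sq] := noprop q qf; [by left | right].
have q0 : q != 0 by rewrite -size_poly_gt0 sq.
have s0 : s != 0.
  by apply: contraNneq (binom_poly_neq0 c N_gt0); rewrite e => ->; rewrite mulr0.
have := size_mul q0 s0; rewrite -e size_binom_poly // sq addSn /= => sizes.
by rewrite -(leq_add2l N) -sizes addn1.
Qed.

Theorem lemma5 (r n b : nat) :
  (1 <= r)%N -> (0 < n)%N -> (2 ^ r %| n)%N ->
  odd b -> (0 < b)%N -> propP n b ->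
  irreducible_over_Z ('X^n + ((b ^ (2 ^ r))%N)%:R%:P : {poly int}).
Proof.
move=> r_gt0 n_gt0 _ ob _ Pb.
apply: (no_proper_divisor_irreducible n_gt0).
exact: binom_no_proper_divisor r_gt0 ob Pb n n_gt0 (dvdnn n).
Qed.
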